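(* Let $Y$ be a complex Banach space, let $I'\subseteq I\subseteq\mathbb R^n$ with $I+I'\subseteq I$ and $I'$ unbounded, let $F:I\to Y$ be uniformly continuous and Bohr $I'$-almost periodic (respectively, uniformly continuous and $I'$-uniformly recurrent), let $S\subseteq\mathbb R^n$ be bounded, and assume: (AP-E) for every $\mathbf t'\in\mathbb R^n$ there exists a finite $M>0$ such that $\mathbf t'+I'_M\subseteq I$. Set $\Omega_S:=[(I'\cup(-I'))+(I'\cup(-I'))]\cup S$. Then there exists a uniformly continuous, Bohr $\Omega_S$-almost periodic (respectively, uniformly continuous, $\Omega_S$-uniformly recurrent) function $\tilde F:\mathbb R^n\to Y$ with $\tilde F(\mathbf t)=F(\mathbf t)$ for all $\mathbf t\in I$; moreover, in the almost periodic case, such a function $\tilde F$ is unique provided that $\mathbb R^n\setminus\Omega_S$ is bounded.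
   Context: $I'_M:=\{\lambda\in I':|\lambda|\ge M\}$; $B(\mathbf t_0,l)$ is the closed Euclidean ball. For $J'\subseteq J\subseteq\mathbb R^n$ with $J+J'\subseteq J$, a continuous $G:J\to Y$ is Bohr $J'$-almost periodic if for every $\epsilon>0$ there exists $l>0$ such that for each $\mathbf t_0\in J'$ there exists $\tau\in B(\mathbf t_0,l)\cap J'$ with $\|G(\mathbf t+\tau)-G(\mathbf t)\|_Y\le\epsilon$ for all $\mathbf t\in J$; $G$ is $J'$-uniformly recurrent if there is a sequence $(\tau_k)$ in $J'$ with $|\tau_k|\to\infty$ and $\lim_{k\to\infty}\sup_{\mathbf t\in J}\|G(\mathbf t+\tau_k)-G(\mathbf t)\|_Y=0$. (Here these notions are applied with $J=I$, $J'=I'$, and with $J=\mathbb R^n$, $J'=\Omega_S$.) *)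

From HB Require Import structures.
From mathcomp Require Import all_boot all_order all_algebra.
From mathcomp Require Import all_classical all_reals all_analysis.
From mathcomp Require Import complex.
Set Implicit Arguments. Unset Strict Implicit. Unset Printing Implicit Defensive.
Import Order.TTheory GRing.Theory Num.Theory.
Import numFieldNormedType.Exports.
Local Open Scope classical_set_scope.
Local Open Scope ring_scope.
Local Open Scope complex_scope.

(* Points of R^n are row vectors 'rV[R]_n; Y is a complex Banach space,
   i.e. a complete normed module over R[i] = complex R.  Its norm `|y|
   takes values in R[i] (with zero imaginary part); bounds are written
   `|y| <= e%:C with e : R. *)

Section Defs.
Variables (R : realType) (Y : completeNormedModType R[i]) (n : nat).
Local Notation vec := 'rV[R]_n.

Definition enorm (t : vec) : R := Num.sqrt (\sum_(i < n) t ord0 i ^+ 2).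

Definition ebounded (A : set vec) : Prop :=
  exists M : R, forall x, A x -> enorm x <= M.

Definition setM (I' : set vec) (M : R) : set vec :=
  [set l | I' l /\ M <= enorm l].

Definition msum (A B : set vec) : set vec :=
  [set x | exists a b, A a /\ B b /\ x = a + b].

Definition symset (J : set vec) : set vec := [set x | J x \/ J (- x)].

Definition OmegaS (I' S : set vec) : set vec :=
  msum (symset I') (symset I') `|` S.

Definition cont_on (J : set vec) (G : vec -> Y) : Prop :=
  forall t, J t -> forall eps : R, 0 < eps -> exists delta : R, 0 < delta /\
    forall s, J s -> enorm (s - t) < delta -> `|G s - G t| <= eps%:C.

Definition unif_cont_on (J : set vec) (G : vec -> Y) : Prop :=
  forall eps : R, 0 < eps -> exists delta : R, 0 < delta /\
    forall t s, J t -> J s -> enorm (t - s) < delta -> `|G t - G s| <= eps%:C.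

Definition bohr_ap (J J' : set vec) (G : vec -> Y) : Prop :=
  cont_on J G /\
  forall eps : R, 0 < eps -> exists l : R, 0 < l /\
    forall t0, J' t0 -> exists tau, J' tau /\ enorm (tau - t0) <= l /\
      forall t, J t -> `|G (t + tau) - G t| <= eps%:C.

(* J'-uniform recurrence of a continuous G : J -> Y;
   the condition  sup_{t in J} ||G(t+tau_k) - G(t)|| -> 0  is unfolded. *)
Definition unif_rec (J J' : set vec) (G : vec -> Y) : Prop :=
  cont_on J G /\
  exists tau : nat -> vec, (forall k, J' (tau k)) /\
    (forall M : R, exists N : nat, forall k, (N <= k)%N -> M <= enorm (tau k)) /\
    (forall eps : R, 0 < eps -> exists N : nat, forall k, (N <= k)%N ->
       forall t, J t -> `|G (t + tau k) - G t| <= eps%:C).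

End Defs.

From HB Require Import structures.
From mathcomp Require Import all_boot all_order all_algebra.
From mathcomp Require Import all_classical all_reals all_analysis.
From mathcomp Require Import complex.
From mathcomp Require Import ring lra.
Set Implicit Arguments. Unset Strict Implicit. Unset Printing Implicit Defensive.
Import Order.TTheory GRing.Theory Num.Theory.
Import numFieldNormedType.Exports.
Local Open Scope classical_set_scope.
Local Open Scope ring_scope.
Local Open Scope complex_scope.

(** Both hypotheses on [F] provide arbitrarily long [eps]-periods [tau] in [I']
   (in the Bohr case because [I'] is unbounded).  Choose such [tau_k] with
   [eps = 1/(k+1)] and [|tau_k| >= k]: by (AP-E), [t + tau_k] lies in [I] for
   large [k], and [F (t + tau_k)] is a Cauchy sequence.  Its limit [ext t] agrees
   with [F] on [I], is uniformly continuous and inherits every [I']-period of [F];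
   since sums and opposites of periods are periods, this gives the properties
   relative to [OmegaS I' S].  For uniqueness, let [G] be another such extension,
   [lam_k] long [eps]-periods of [F] with [|lam_k| >= k], and [sig_k]
   [eps]-periods of [G] within a fixed distance of [2 lam_k].  By
   Bolzano-Weierstrass, [sig_k - sig_j] is close to [2 lam_k - 2 lam_j] for some
   [j] and arbitrarily large [k].  For large [k] the point
   [t + 2 lam_k - 2 lam_j] lies in [I], where [G] and [ext] both equal [F], and
   comparing [G] and [ext] along these two shifts gives [G t = ext t]. *)

Section RealNorm.
Variables (R : realType) (Y : completeNormedModType R[i]).

(* The norm of [Y] takes real values in [R[i]]; its real part lives in the
   totally ordered field [R], where [lra] applies. *)
Definition rnorm (y : Y) : R := complex.Re `|y|.

Lemma rnormE y : `|y| = (rnorm y)%:C.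
Proof. by rewrite /rnorm RRe_real // normr_real. Qed.

Lemma rnorm_lecR y e : (`|y| <= e%:C) = (rnorm y <= e).
Proof. by rewrite rnormE lecR. Qed.

Lemma rnorm_ltcR y e : (`|y| < e%:C) = (rnorm y < e).
Proof. by rewrite rnormE ltcR. Qed.

Lemma ler_rnormD a b : rnorm (a + b) <= rnorm a + rnorm b.
Proof. by rewrite -lecR rmorphD /= -!rnormE ler_normD. Qed.

Lemma rnorm_distC a b : rnorm (a - b) = rnorm (b - a).
Proof. by rewrite /rnorm distrC. Qed.

Lemma ler_rnorm_distD b a c : rnorm (a - c) <= rnorm (a - b) + rnorm (b - c).
Proof. by rewrite -[a - c](subrKA b) ler_rnormD. Qed.

Lemma rnorm_dist_le0 a b : rnorm (a - b) <= 0 -> a = b.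
Proof. by rewrite -rnorm_lecR normr_le0 subr_eq0 => /eqP. Qed.

Lemma posC_real (x : R[i]) : 0 < x -> exists2 r : R, 0 < r & x = r%:C.
Proof.
move=> x0; have xE : x = (complex.Re x)%:C by rewrite RRe_real // gtr0_real.
by exists (complex.Re x) => //; rewrite -ltcR -xE.
Qed.

End RealNorm.

Section EuclideanNorm.
Variables (R : realType) (n : nat).
Local Notation vec := 'rV[R]_n.
Implicit Types x y z : vec.

Lemma sum_sqr_ge0 x : 0 <= \sum_(i < n) x ord0 i ^+ 2.
Proof. by apply: sumr_ge0 => i _; rewrite sqr_ge0. Qed.

Lemma enormN x : enorm (- x) = enorm x.
Proof.
by rewrite /enorm; congr Num.sqrt; apply: eq_bigr => i _; rewrite mxE sqrrN.
Qed.

Lemma enorm_distC x y : enorm (x - y) = enorm (y - x).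
Proof. by rewrite -enormN opprB. Qed.

Lemma ler_coord_enorm x i : `|x ord0 i| <= enorm x.
Proof.
rewrite /enorm -sqrtr_sqr ler_sqrt; last exact: sum_sqr_ge0.
by rewrite (bigD1 i) //= lerDl; apply: sumr_ge0 => j _; exact: sqr_ge0.
Qed.

Lemma ler_sum_sqr (r : seq 'I_n) (f : 'I_n -> R) : (forall i, 0 <= f i) ->
  \sum_(i <- r) f i ^+ 2 <= (\sum_(i <- r) f i) ^+ 2.
Proof.
move=> f0; elim: r => [|a r IH]; first by rewrite !big_nil expr0n.
rewrite !big_cons; have := f0 a; have : 0 <= \sum_(i <- r) f i by apply: sumr_ge0.
nra.
Qed.

Lemma enorm_le_coord x (r : R) : (forall i, `|x ord0 i| <= r) -> enorm x <= n%:R * r.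
Proof.
move=> xr; have s0 : 0 <= \sum_(i < n) `|x ord0 i| by apply: sumr_ge0.
apply: (@le_trans _ _ (\sum_(i < n) `|x ord0 i|)); last first.
  apply: le_trans (ler_sum _ (fun i _ => xr i)) _.
  by rewrite sumr_const card_ord mulr_natl.
rewrite /enorm -[leRHS](ger0_norm s0) -sqrtr_sqr ler_sqrt; last exact: sqr_ge0.
apply: le_trans (ler_sum_sqr _ (fun i => normr_ge0 _)).
rewrite (eq_bigr (fun i => `|x ord0 i| ^+ 2)) // => i _.
by rewrite real_normK ?num_real.
Qed.

(* Lagrange's identity: [\sum_(i, j) (a_i b_j - a_j b_i)^2 = 2 (A B - C^2)]. *)
Lemma cauchy_schwarz_sum (a b : 'I_n -> R) :
  (\sum_(i < n) a i * b i) ^+ 2 <=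
  (\sum_(i < n) a i ^+ 2) * (\sum_(i < n) b i ^+ 2).
Proof.
set A := \sum_(i < n) a i ^+ 2; set B := \sum_(i < n) b i ^+ 2.
set C := \sum_(i < n) a i * b i.
have AB : A * B = \sum_(i < n) \sum_(j < n) a i ^+ 2 * b j ^+ 2.
  by rewrite mulr_suml; apply: eq_bigr => i _; rewrite mulr_sumr.
have BA : A * B = \sum_(i < n) \sum_(j < n) a j ^+ 2 * b i ^+ 2.
  rewrite mulrC mulr_suml; apply: eq_bigr => i _; rewrite mulr_sumr.
  by apply: eq_bigr => j _; rewrite mulrC.
have CC : C ^+ 2 = \sum_(i < n) \sum_(j < n) (a i * b i) * (a j * b j).
  by rewrite expr2 mulr_suml; apply: eq_bigr => i _; rewrite mulr_sumr.
have lagrange : \sum_(i < n) \sum_(j < n) (a i * b j - a j * b i) ^+ 2 =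
                A * B + A * B - 2 * C ^+ 2.
  rewrite {1}AB {1}BA CC -big_split /= mulr_sumr -sumrB.
  apply: eq_bigr => i _; rewrite -big_split /= mulr_sumr -sumrB.
  by apply: eq_bigr => j _; ring.
have : 0 <= \sum_(i < n) \sum_(j < n) (a i * b j - a j * b i) ^+ 2.
  by apply: sumr_ge0 => i _; apply: sumr_ge0 => j _; apply: sqr_ge0.
by rewrite lagrange; lra.
Qed.

Lemma ler_enormD x y : enorm (x + y) <= enorm x + enorm y.
Proof.
rewrite /enorm.
set A := \sum_(i < n) x ord0 i ^+ 2; set B := \sum_(i < n) y ord0 i ^+ 2.
set C := \sum_(i < n) x ord0 i * y ord0 i.
have A0 : 0 <= A by exact: sum_sqr_ge0.
have B0 : 0 <= B by exact: sum_sqr_ge0.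
have -> : \sum_(i < n) (x + y) ord0 i ^+ 2 = A + C *+ 2 + B.
  rewrite /A /B /C -sumrMnl -!big_split /=.
  by apply: eq_bigr => i _; rewrite mxE sqrrD.
have CAB : C <= Num.sqrt A * Num.sqrt B.
  apply: le_trans (ler_norm C) _.
  rewrite -sqrtr_sqr -sqrtrM // ler_sqrt; last by rewrite mulr_ge0.
  exact: cauchy_schwarz_sum.
have sA := sqr_sqrtr A0; have sB := sqr_sqrtr B0.
have sA0 := sqrtr_ge0 A; have sB0 := sqrtr_ge0 B.
rewrite -(ger0_norm (addr_ge0 sA0 sB0)) -sqrtr_sqr ler_sqrt; last exact: sqr_ge0.
rewrite sqrrD sA sB; lra.
Qed.

Lemma ler_enorm_distD y x z : enorm (x - z) <= enorm (x - y) + enorm (y - z).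
Proof. by rewrite -[x - z](subrKA y) ler_enormD. Qed.

Lemma ler_enorm_double x : enorm x <= enorm (x + x).
Proof.
rewrite /enorm ler_sqrt; last exact: sum_sqr_ge0.
by apply: ler_sum => i _; rewrite mxE; nra.
Qed.

Lemma not_ebounded_gt (A : set vec) :
  ~ ebounded A -> forall M, exists2 x, A x & M < enorm x.
Proof.
move=> Aunb M; apply: contrapT => noA; apply: Aunb; exists M => x Ax.
by rewrite leNgt; apply/negP => Mx; apply: noA; exists x.
Qed.

(* Bolzano-Weierstrass: take [a j] close to a cluster point of [a]. *)
Lemma bounded_seq_recurrent (a : nat -> vec) (r d : R) :
  (forall k, enorm (a k) <= r) -> 0 < d ->
  exists j, forall N, exists2 k, (N <= k)%N & enorm (a k - a j) < d.
Proof.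
move=> ar d0.
pose K := [set v : vec | forall i, `[- r, r]%classic (v ord0 i)].
have cK : compact K.
  by apply: (@rV_compact _ _ (fun=> `[- r, r]%classic)) => i; exact: segment_compact.
have aK : (a @ \oo) K.
  exists 0%N => // k _ i /=; rewrite in_itv /= -ler_norml.
  exact: le_trans (ler_coord_enorm _ _) (ar k).
have [c [_ clc]] := cK _ _ aK.
pose d' := d / (2 * (n%:R + 1)).
have d'0 : 0 < d' by rewrite divr_gt0 // mulr_gt0 // ltr_wpDl.
have near_c N : exists2 k, (N <= k)%N & ball c d' (a k).
  have aN : (a @ \oo) [set v | exists2 k, (N <= k)%N & v = a k].
    by exists N => // k /= Nk; exists k.
  by have [_ [[k Nk ->] ck]] := clc _ _ aN (nbhsx_ballx c d' d'0); exists k.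
have coord v i : ball c d' v -> `|c ord0 i - v ord0 i| < d'.
  by move=> [_ /(_ ord0 i)]; rewrite -ball_normE.
have [j _ cj] := near_c 0%N.
exists j => N; have [k Nk ck] := near_c N; exists k => //.
apply: (@le_lt_trans _ _ (n%:R * (d' + d'))).
  apply: enorm_le_coord => i; rewrite !mxE.
  apply: le_trans (ler_distD (c ord0 i) _ _) _.
  by rewrite distrC; apply/ltW/ltrD; exact: coord.
have n1 : 0 < n%:R + 1 :> R by rewrite ltr_wpDl.
have -> : n%:R * (d' + d') = d * (n%:R / (n%:R + 1)).
  by rewrite /d'; field; rewrite gt_eqF.
by rewrite gtr_pMr // ltr_pdivrMr //; lra.
Qed.

End EuclideanNorm.

Section Periods.
Variables (R : realType) (Y : completeNormedModType R[i]) (n : nat).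
Local Notation vec := 'rV[R]_n.
Implicit Types (J : set vec) (G : vec -> Y).

Definition eps_period J G (p : vec) (eps : R) :=
  forall t, J t -> rnorm (G (t + p) - G t) <= eps.

Lemma eps_periodP J G p eps : eps_period J G p eps <->
  (forall t, J t -> `|G (t + p) - G t| <= eps%:C).
Proof.
by split=> Gp t Jt; [rewrite rnorm_lecR | rewrite -rnorm_lecR]; exact: Gp.
Qed.

Lemma eps_periodN G p eps :
  eps_period setT G p eps -> eps_period setT G (- p) eps.
Proof. by move=> Gp t _; rewrite rnorm_distC -{1}(subrK p t); exact: Gp. Qed.

Lemma eps_periodD G p q e1 e2 : eps_period setT G p e1 ->
  eps_period setT G q e2 -> eps_period setT G (p + q) (e1 + e2).
Proof.
move=> Gp Gq t _; rewrite addrA [e1 + e2]addrC.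
apply: le_trans (ler_rnorm_distD (G (t + p)) _ _) _.
by apply: lerD; [exact: Gq | exact: Gp].
Qed.

Lemma unif_cont_cont J G : unif_cont_on J G -> cont_on J G.
Proof.
move=> Guc t Jt eps eps0; have [d [d0 Gd]] := Guc _ eps0.
by exists d; split=> // s Js st; exact: Gd.
Qed.

Definition has_long_periods (I I' : set vec) G := forall eps M : R, 0 < eps ->
  exists tau, I' tau /\ M <= enorm tau /\ eps_period I G tau eps.

Lemma bohr_ap_long_periods I I' G :
  ~ ebounded I' -> bohr_ap I I' G -> has_long_periods I I' G.
Proof.
move=> I'unb [_ Gap] eps M eps0; have [l [_ Gl]] := Gap _ eps0.
have [t0 I't0 Mt0] := not_ebounded_gt I'unb (M + l).
have [tau [I'tau [t0tau Gtau]]] := Gl _ I't0.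
exists tau; split=> //; split; last exact/eps_periodP.
have := ler_enorm_distD tau t0 0; rewrite !subr0 enorm_distC; lra.
Qed.

Lemma unif_rec_long_periods I I' G : unif_rec I I' G -> has_long_periods I I' G.
Proof.
move=> [_ [tau [I'tau [tau_big Gtau]]]] eps M eps0.
have [N1 N1M] := tau_big M; have [N2 N2eps] := Gtau _ eps0.
exists (tau (maxn N1 N2)); split=> //; split; first by rewrite N1M ?leq_maxl.
by apply/eps_periodP => t It; apply: N2eps; rewrite ?leq_maxr.
Qed.

(* A point of [S] is within a bounded distance of [0 = l0 + (- l0)], which is
   an [eps]-period of every function. *)
Lemma bohr_ap_OmegaS (I' S : set vec) G l0 : I' l0 -> ebounded S ->
  bohr_ap setT I' G -> bohr_ap setT (OmegaS I' S) G.
Proof.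
move=> I'l0 [B SB] [Gc Gap]; split=> // eps eps0.
have [l [l_gt0 Gl]] := Gap (eps / 2) ltac:(lra).
have near_sym a : symset I' a -> exists s, symset I' s /\
    enorm (s - a) <= l /\ eps_period setT G s (eps / 2).
  case=> [/Gl [s [I's [sa /eps_periodP Gs]]] | /Gl [s [I's [sa /eps_periodP Gs]]]].
    by exists s; split; [left | split].
  exists (- s); split; first by right; rewrite opprK.
  by split; [rewrite -opprD enormN -[a]opprK | exact: eps_periodN].
have B0 := normr_ge0 B; have BB := ler_norm B.
exists (l + l + `|B|); split; first lra.
move=> t0 [[a [b [I'a [I'b ->]]]] | St0].
  have [sa [I'sa [sa_a Gsa]]] := near_sym _ I'a.
  have [sb [I'sb [sb_b Gsb]]] := near_sym _ I'b.
  exists (sa + sb); split; first by left; exists sa, sb.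
  split; last by move=> t _; rewrite rnorm_lecR (splitr eps); apply: eps_periodD.
  rewrite opprD addrACA; apply: le_trans (ler_enormD _ _) _; lra.
exists (l0 + - l0); split.
  by left; exists l0, (- l0); do !split=> //; [left | right; rewrite opprK].
split; first by rewrite subrr sub0r enormN; have := SB _ St0; lra.
by move=> t _; rewrite subrr addr0 subrr normr0 ler0c ltW.
Qed.

Lemma unif_rec_OmegaS (I' S : set vec) G :
  unif_rec setT I' G -> unif_rec setT (OmegaS I' S) G.
Proof.
move=> [Gc [tau [I'tau [tau_big Gtau]]]]; split=> //.
exists (fun k => tau k + tau k); split.
  by move=> k; left; exists (tau k), (tau k); do !split=> //; left.
split.
  move=> M; have [N NM] := tau_big M; exists N => k Nk.
  exact: le_trans (NM k Nk) (ler_enorm_double _).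
move=> eps eps0; have [N Neps] := Gtau (eps / 2) ltac:(lra).
have Gk k : (N <= k)%N -> eps_period setT G (tau k) (eps / 2).
  by move=> Nk; apply/eps_periodP; exact: Neps.
exists N => k Nk t _; rewrite rnorm_lecR (splitr eps).
exact: (eps_periodD (Gk k Nk) (Gk k Nk)).
Qed.

End Periods.

Lemma near_inv_succ_le (R : realType) (e : R) :
  0 < e -> \forall k \near \oo, k.+1%:R^-1 <= e.
Proof.
by move=> e0; apply: filterS (near_infty_natSinv_lt (PosNum e0)) => k /ltW.
Qed.

Section Extension.
Variables (R : realType) (Y : completeNormedModType R[i]) (n : nat).
Local Notation vec := 'rV[R]_n.
Variables (I I' : set vec) (F : vec -> Y).
Hypothesis ape : forall t' : vec, exists M : R, 0 < M /\
  forall l, setM I' M l -> I (t' + l).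
Hypothesis long : has_long_periods I I' F.

Lemma exists_long_period (k : nat) : exists tau, I' tau /\ k%:R <= enorm tau /\
  eps_period I F tau k.+1%:R^-1.
Proof. by apply: long; rewrite invr_gt0. Qed.

Definition long_period k := projT1 (cid (exists_long_period k)).

Lemma long_periodP k : I' (long_period k) /\ k%:R <= enorm (long_period k) /\
  eps_period I F (long_period k) k.+1%:R^-1.
Proof. exact: projT2 (cid (exists_long_period k)). Qed.

Definition ape_bound t := projT1 (cid (ape t)).

Lemma shift_in_I t k : ape_bound t <= k%:R -> I (t + long_period k).
Proof.
move=> tk; have [_ apeP] := projT2 (cid (ape t)); apply: apeP; split.
  exact: (long_periodP k).1.
exact: le_trans tk (long_periodP k).2.1.
Qed.

Definition approx t k := F (t + long_period k).

Lemma approx_dist t j k : ape_bound t <= j%:R -> ape_bound t <= k%:R ->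
  rnorm (approx t j - approx t k) <= j.+1%:R^-1 + k.+1%:R^-1.
Proof.
move=> tj tk; rewrite /approx [_^-1 + _]addrC.
apply: le_trans (ler_rnorm_distD (F (t + long_period j + long_period k)) _ _) _.
apply: lerD.
  by rewrite rnorm_distC; apply: (long_periodP k).2.2; exact: shift_in_I.
by rewrite (addrAC t); apply: (long_periodP j).2.2; exact: shift_in_I.
Qed.

Lemma approx_cvg t : cvg (approx t @ \oo).
Proof.
apply: cauchy_cvg; apply: cauchy_exP => _ /posC_real [e e0 ->].
have [N [tN Ne]] : exists N, ape_bound t <= N%:R /\ N.+1%:R^-1 <= e / 3.
  apply: (@filter_ex _ \oo _); near=> N; split; near: N; first exact: nbhs_infty_ger.
  by apply: near_inv_succ_le; lra.
exists (approx t N).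
suff : \forall k \near \oo, ball (approx t N) e%:C (approx t k) by [].
near=> k.
have tk : ape_bound t <= k%:R by near: k; exact: nbhs_infty_ger.
have ke : k.+1%:R^-1 <= e / 3 by near: k; apply: near_inv_succ_le; lra.
rewrite -ball_normE /ball_ /= rnorm_ltcR.
apply: le_lt_trans (approx_dist tN tk) (le_lt_trans (lerD Ne ke) _); lra.
Unshelve. all: by end_near.
Qed.

Definition ext t := lim (approx t @ \oo).

Lemma ext_shift_dist t rho eps : I (t + rho) -> eps_period I F rho eps ->
  rnorm (F (t + rho) - ext t) <= eps.
Proof.
move=> Itrho Frho; apply/ler_addgt0Pr => e e0.
have /cvgrPdist_lt /(_ (e / 2)%:C) : approx t @ \oo --> ext t by exact: approx_cvg.
rewrite ltcR => /(_ ltac:(lra)) ext_near.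
have [k [tk [ke ext_k]]] : exists k,
    ape_bound t <= k%:R /\ k.+1%:R^-1 <= e / 2 /\ rnorm (ext t - approx t k) < e / 2.
  apply: (@filter_ex _ \oo _); near=> k; do !split; near: k.
  - exact: nbhs_infty_ger.
  - by apply: near_inv_succ_le; lra.
  - by apply: filterS ext_near => k; rewrite rnorm_ltcR.
have F_k : rnorm (F (t + rho) - approx t k) <= k.+1%:R^-1 + eps.
  apply: le_trans (ler_rnorm_distD (F (t + rho + long_period k)) _ _) _.
  apply: lerD; first by rewrite rnorm_distC; exact: (long_periodP k).2.2.
  by rewrite /approx (addrAC t); apply: Frho; exact: shift_in_I.
apply: le_trans (ler_rnorm_distD (approx t k) _ _) _.
rewrite (rnorm_distC _ (ext t)).
apply: le_trans (lerD F_k (ltW ext_k)) _.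
by apply: le_trans (lerD (lerD ke (lexx eps)) (lexx _)) _; lra.
Unshelve. all: by end_near.
Qed.

Lemma ext_eq t : I t -> ext t = F t.
Proof.
move=> It; apply/esym/rnorm_dist_le0; rewrite -[t in F t]addr0.
apply: ext_shift_dist; first by rewrite addr0.
by move=> s _; rewrite addr0 subrr -rnorm_lecR normr0.
Qed.

Lemma ext_dist_le t s eps :
  (forall k, ape_bound t <= k%:R -> ape_bound s <= k%:R ->
     rnorm (approx t k - approx s k) <= eps) ->
  rnorm (ext t - ext s) <= eps.
Proof.
move=> approx_ts; apply/ler_addgt0Pr => e e0.
have [k [tk [sk ke]]] : exists k, ape_bound t <= k%:R /\ ape_bound s <= k%:R /\
    k.+1%:R^-1 <= e / 2.
  apply: (@filter_ex _ \oo _); near=> k; do !split; near: k;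
    [exact: nbhs_infty_ger | exact: nbhs_infty_ger | apply: near_inv_succ_le; lra].
have tk_ext := ext_shift_dist (shift_in_I tk) (long_periodP k).2.2.
have sk_ext := ext_shift_dist (shift_in_I sk) (long_periodP k).2.2.
have ts_k := approx_ts k tk sk.
rewrite -/(approx t k) rnorm_distC in tk_ext; rewrite -/(approx s k) in sk_ext.
apply: le_trans (ler_rnorm_distD (approx t k) _ _) _.
apply: le_trans (lerD tk_ext (ler_rnorm_distD (approx s k) _ _)) _.
by apply: le_trans (lerD ke (lerD ts_k (le_trans sk_ext ke))) _; lra.
Unshelve. all: by end_near.
Qed.

Lemma ext_period p eps : I' p -> eps_period I F p eps -> eps_period setT ext p eps.
Proof.
move=> I'p Fp t _; apply: ext_dist_le => k _ tk.
by rewrite /approx (addrAC t); apply: Fp; exact: shift_in_I.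
Qed.

Lemma ext_unif_cont : unif_cont_on I F -> unif_cont_on setT ext.
Proof.
move=> Fuc eps eps0; have [d [d0 Fd]] := Fuc _ eps0.
exists d; split=> // t s _ _ ts; rewrite rnorm_lecR; apply: ext_dist_le => k tk sk.
rewrite -rnorm_lecR; apply: Fd; [exact: shift_in_I | exact: shift_in_I |].
by rewrite [s + _]addrC addrKA.
Qed.

Lemma ext_bohr_ap : unif_cont_on I F -> bohr_ap I I' F -> bohr_ap setT I' ext.
Proof.
move=> Fuc [_ Fap]; split; first exact/unif_cont_cont/ext_unif_cont.
move=> eps eps0; have [l [l0 Fl]] := Fap _ eps0; exists l; split=> // t0 I't0.
have [tau [I'tau [t0tau Ftau]]] := Fl _ I't0; exists tau; do !split=> //.
by apply/eps_periodP/ext_period => //; exact/eps_periodP.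
Qed.

Lemma ext_unif_rec : unif_cont_on I F -> unif_rec I I' F -> unif_rec setT I' ext.
Proof.
move=> Fuc [_ [tau [I'tau [tau_big Ftau]]]].
split; first exact/unif_cont_cont/ext_unif_cont.
exists tau; do 2!split=> //; move=> eps eps0; have [N Neps] := Ftau _ eps0.
exists N => k Nk; apply/eps_periodP/ext_period => //.
by apply/eps_periodP; exact: Neps.
Qed.

Hypothesis I_add : forall t l, I t -> I' l -> I (t + l).

Lemma ext_unique (S : set vec) G : unif_cont_on setT G ->
  bohr_ap setT (OmegaS I' S) G -> (forall t, I t -> G t = F t) -> G =1 ext.
Proof.
move=> Guc [_ Gap] GF t; apply: rnorm_dist_le0; apply/ler_addgt0Pr => eta eta0.
rewrite add0r; pose e := eta / 7; have e0 : 0 < e by rewrite divr_gt0.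
have [d [d0 Gd]] := Guc _ e0.
have [l [_ Gl]] := Gap _ e0.
have [lam lamP] := choice (fun k : nat => long (k%:R) e0).
have : forall k, exists s, enorm (s - (lam k + lam k)) <= l /\ eps_period setT G s e.
  move=> k; have [|s [_ [ls Gs]]] := Gl (lam k + lam k).
    by left; exists (lam k), (lam k); do !split; left; exact: (lamP k).1.
  by exists s; split=> //; apply/eps_periodP.
move=> /choice [sig sigP].
have [j jP] := @bounded_seq_recurrent _ _ (fun k => sig k - (lam k + lam k)) l d
  (fun k => (sigP k).1) d0.
have [M [_ MP]] := ape (t - (lam j + lam j)).
have [N NM] : exists N : nat, M <= N%:R := @filter_ex _ \oo _ _ (nbhs_infty_ger M).
have [k Nk sig_lam] := jP N.
pose mu := (lam k + lam k) - (lam j + lam j); pose mu' := sig k - sig j.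
have I_mu : I (t + mu).
  have -> : t + mu = t - (lam j + lam j) + lam k + lam k.
    by rewrite /mu [_ + _ - _]addrC !addrA.
  apply: I_add; last exact: (lamP k).1.
  apply: MP; split; first exact: (lamP k).1.
  by apply: le_trans NM (le_trans _ (lamP k).2.1); rewrite ler_nat.
have G_mu' : rnorm (G t - G (t + mu')) <= e + e.
  by rewrite rnorm_distC; apply: (eps_periodD (sigP k).2 (eps_periodN (sigP j).2)).
have G_mu : rnorm (G (t + mu') - G (t + mu)) <= e.
  rewrite -rnorm_lecR; apply: Gd => //.
  suff -> : (t + mu') - (t + mu) =
      (sig k - (lam k + lam k)) - (sig j - (lam j + lam j)) by [].
  rewrite [t + mu']addrC addrKA /mu' /mu !opprB addrACA [RHS]addrACA.
  by rewrite (addrC (- sig j)).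
have ext_mu : rnorm (ext (t + mu) - ext t) <= e + e + (e + e).
  have ext_lam i : eps_period setT ext (lam i) e.
    exact: ext_period (lamP i).1 (lamP i).2.2.
  by apply: (eps_periodD (eps_periodD (ext_lam k) (ext_lam k))
                         (eps_periodN (eps_periodD (ext_lam j) (ext_lam j)))).
rewrite (GF _ I_mu) -(ext_eq I_mu) in G_mu.
apply: le_trans (ler_rnorm_distD (G (t + mu')) _ _) _.
apply: le_trans (lerD G_mu' (ler_rnorm_distD (ext (t + mu)) _ _)) _.
by apply: le_trans (lerD (lexx _) (lerD G_mu ext_mu)) _; rewrite /e; lra.
Qed.

End Extension.

Theorem theorem2p35 (R : realType) (Y : completeNormedModType R[i]) (n : nat)
  (I I' S : set 'rV[R]_n) (F : 'rV[R]_n -> Y) :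
  I' `<=` I ->
  (forall t l, I t -> I' l -> I (t + l)) ->
  ~ ebounded I' ->
  ebounded S ->
  (* (AP-E) *)
  (forall t' : 'rV[R]_n, exists M : R, 0 < M /\
     forall l, setM I' M l -> I (t' + l)) ->
  (* almost periodic case *)
  ((unif_cont_on I F /\ bohr_ap I I' F) ->
     (exists Ft : 'rV[R]_n -> Y,
        unif_cont_on setT Ft /\ bohr_ap setT (OmegaS I' S) Ft /\
        forall t, I t -> Ft t = F t) /\
     (ebounded (~` OmegaS I' S) ->
        forall G1 G2 : 'rV[R]_n -> Y,
          unif_cont_on setT G1 -> bohr_ap setT (OmegaS I' S) G1 ->
          (forall t, I t -> G1 t = F t) ->
          unif_cont_on setT G2 -> bohr_ap setT (OmegaS I' S) G2 ->
          (forall t, I t -> G2 t = F t) ->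
          forall t, G1 t = G2 t)) /\
  (* uniformly recurrent case *)
  ((unif_cont_on I F /\ unif_rec I I' F) ->
     exists Ft : 'rV[R]_n -> Y,
       unif_cont_on setT Ft /\ unif_rec setT (OmegaS I' S) Ft /\
       forall t, I t -> Ft t = F t).
Proof.
move=> _ I_add I'unb Sb ape.
have [l0 I'l0 _] := not_ebounded_gt I'unb 0.
split=> [[Fuc Fap] | [Fuc Fur]].
  have long := bohr_ap_long_periods I'unb Fap.
  split=> [|_ G1 G2 G1uc G1ap G1F G2uc G2ap G2F t].
    exists (ext long); split; first exact: ext_unif_cont.
    split; last exact: ext_eq.
    exact: bohr_ap_OmegaS I'l0 Sb (ext_bohr_ap ape long Fuc Fap).
  rewrite (ext_unique ape long I_add G1uc G1ap G1F).
  by rewrite (ext_unique ape long I_add G2uc G2ap G2F).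
have long := unif_rec_long_periods Fur.
exists (ext long); split; first exact: ext_unif_cont.
split; last exact: ext_eq.
exact: unif_rec_OmegaS (ext_unif_rec ape long Fuc Fur).
Qed.
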